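(* Let $(M,I,J,K)$ be a hypercomplex manifold of quaternionic dimension $n$, let $\Omega_1$ be a strictly positive $(2,0)$-form (w.r.t. $I$), i.e. $\Omega_1(z,\bar zJ)>0$ for every nonzero $(1,0)$-vector $z$, and let $\Omega_2$ be a q-real $(2,0)$-form on $M$. Then for each $x\in M$ there exists a basis $e_1,\bar e_1J,\dots,e_n,\bar e_nJ$ of $T^{1,0}_xM$ such that for all $i\ne j$ $$\Omega_1(e_i,e_j)=\Omega_2(e_i,e_j)=\Omega_1(e_i,\bar e_jJ)=\Omega_2(e_i,\bar e_jJ)=0.$$
   Context: A hypercomplex manifold $(M,I,J,K)$ carries three integrable complex structures with $I\circ J\circ K=-\mathrm{id}_{TM}$; endomorphisms act on tangent vectors from the right (written $v\mapsto vJ$, extended complex-linearly); types $(p,q)$ and $T^{1,0}M$ refer to $I$, and $J$ maps $T^{0,1}_xM$ to $T^{1,0}_xM$. An endomorphism $L$ acts on forms by $(L\alpha)(X_1,\dots,X_k)=\alpha(X_1L,\dots,X_kL)$. A $(2,0)$-form $\alpha$ is q-real if $J\alpha=\bar\alpha$. *)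

From HB Require Import structures.
From mathcomp Require Import all_boot all_algebra.
From mathcomp Require Import complex.
From mathcomp Require Import Rstruct.
Set Implicit Arguments. Unset Strict Implicit. Unset Printing Implicit Defensive.
Import GRing.Theory Num.Theory.
Local Open Scope ring_scope.

Definition Cx : numClosedFieldType := (Rdefinitions.R)[i].

(* Pointwise model of a hypercomplex manifold of quaternionic dimension n at a
   point x: V = T^{1,0}_x M, a complex vector space of dimension 2n, together
   with the map  jJ : z |-> \bar z J  (T^{1,0} -> T^{0,1} -> T^{1,0}), which is
   antilinear and satisfies jJ (jJ z) = - z (since J^2 = -1). *)
Definition antilinear (V : vectType Cx) (j : V -> V) : Prop :=
  forall (a : Cx) (u v : V), j (a *: u + v) = a^* *: j u + j v.

Definition quat_structure (V : vectType Cx) (j : V -> V) : Prop :=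
  antilinear j /\ (forall u : V, j (j u) = - u).

(* A (2,0)-form at x, i.e. its restriction to T^{1,0}_x: an alternating
   complex-bilinear form on V (linearity in the 2nd slot follows from
   linearity in the 1st slot and antisymmetry). *)
Definition form20 (V : vectType Cx) (Om : V -> V -> Cx) : Prop :=
  (forall (a : Cx) (u v w : V), Om (a *: u + v) w = a * Om u w + Om v w) /\
  (forall u v : V, Om u v = - Om v u).

(* Strictly positive: Om(z, \bar z J) > 0 (real and positive) for z <> 0. *)
Definition strictly_positive (V : vectType Cx) (j : V -> V) (Om : V -> V -> Cx) : Prop :=
  forall z : V, z != 0 -> 0 < Om z (j z).

(* q-real: J Om = \bar Om. Evaluated on (0,1)-vectors \bar z, \bar w this reads
   Om(\bar z J, \bar w J) = conj (Om (z, w)) for z, w in T^{1,0}. *)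
Definition q_real (V : vectType Cx) (j : V -> V) (Om : V -> V -> Cx) : Prop :=
  forall z w : V, Om (j z) (j w) = (Om z w)^*.

Definition quat_family (V : vectType Cx) (j : V -> V) (n : nat) (e : 'I_n -> V) : seq V :=
  flatten [seq [:: e i; j (e i)] | i <- enum 'I_n].

From HB Require Import structures.
From mathcomp Require Import all_boot all_order all_algebra.
From mathcomp Require Import complex Rstruct ring.
Import Order.TTheory GRing.Theory Num.Theory.
Local Open Scope ring_scope.
Set Implicit Arguments. Unset Strict Implicit.

(* h(z, w) := Om1 z (j w) is linear in z, antilinear in w and real on the
   diagonal, hence hermitian by polarization; in particular Om1 is q-real.
   On a j-stable subspace W the Gram matrices of Om1 and Om2 give a
   generalized eigenvector: e in W with Om2 e = lam * Om1 e on W.  The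
   subspace of w in W with Om1 e w = Om1 (j e) w = 0 is j-stable (h is
   hermitian), has codimension at most 2, and is orthogonal to e and j e for
   both forms (Om2 by the eigen-relation and q-reality), so we can induct.
   The resulting family e_a, j e_a is h-orthogonal with positive diagonal,
   hence free, hence a basis by counting dimensions. *)

Section Form20.

Variables (V : vectType Cx) (Om : V -> V -> Cx).
Hypothesis Om20 : form20 Om.

Lemma form20_Dl u v w : Om (u + v) w = Om u w + Om v w.
Proof. by have := Om20.1 1 u v w; rewrite scale1r mul1r. Qed.

Lemma form20_0l w : Om 0 w = 0.
Proof. by apply: (addrI (Om 0 w)); rewrite -form20_Dl !addr0. Qed.

Lemma form20_Zl a u w : Om (a *: u) w = a * Om u w.
Proof. by rewrite -[a *: u]addr0 Om20.1 form20_0l addr0. Qed.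

Lemma form20_antisym u v : Om u v = - Om v u.
Proof. exact: Om20.2. Qed.

Lemma form20_alt u : Om u u = 0.
Proof.
apply/eqP; have : Om u u *+ 2 == 0 by rewrite mulr2n {2}form20_antisym subrr.
by rewrite mulrn_eq0.
Qed.

Lemma form20_0r w : Om w 0 = 0.
Proof. by rewrite form20_antisym form20_0l oppr0. Qed.

Lemma form20_Dr u v w : Om w (u + v) = Om w u + Om w v.
Proof. by rewrite form20_antisym form20_Dl opprD -!form20_antisym. Qed.

Lemma form20_Zr a u w : Om w (a *: u) = a * Om w u.
Proof. by rewrite form20_antisym form20_Zl -mulrN -form20_antisym. Qed.

Lemma form20_Nr u w : Om w (- u) = - Om w u.
Proof. by rewrite -scaleN1r form20_Zr mulN1r. Qed.

Lemma form20_suml I (r : seq I) (P : pred I) (c : I -> Cx) (v : I -> V) w :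
  Om (\sum_(i <- r | P i) c i *: v i) w = \sum_(i <- r | P i) c i * Om (v i) w.
Proof.
elim/big_rec2: _ => [|i x y _ <-]; first exact: form20_0l.
by rewrite Om20.1.
Qed.

Lemma form20_sumr I (r : seq I) (P : pred I) (c : I -> Cx) (v : I -> V) w :
  Om w (\sum_(i <- r | P i) c i *: v i) = \sum_(i <- r | P i) c i * Om w (v i).
Proof.
elim/big_rec2: _ => [|i x y _ <-]; first exact: form20_0r.
by rewrite form20_Dr form20_Zr.
Qed.

Lemma form20_hom u : exists f : 'Hom(V, Cx^o), forall w, f w = Om u w.
Proof.
pose g (w : V) : Cx^o := Om u w.
have g_lin : linear g by move=> a v w; rewrite /g form20_Dr form20_Zr.
pose gL : {linear V -> Cx^o} := HB.pack g (GRing.isLinear.Build _ _ _ _ g g_lin).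
by exists (linfun gL) => w; rewrite lfunE.
Qed.

End Form20.

Lemma dimv_leS_cap_lker (K : fieldType) (V : vectType K) (f : 'Hom(V, K^o))
    (U : {vspace V}) :
  (\dim U <= (\dim (U :&: lker f)).+1)%N.
Proof.
rewrite -(limg_ker_dim f U) addnC -add1n leq_add2r.
by rewrite (leq_trans (dimvS (subvf _))) // dimvf.
Qed.

Lemma form20_orthogonal_subspace (V : vectType Cx) (Om : V -> V -> Cx)
    (W : {vspace V}) (u : V) :
  form20 Om ->
  exists2 W' : {vspace V}, (forall w, (w \in W') = (w \in W) && (Om u w == 0))
    & (\dim W <= (\dim W').+1)%N.
Proof.
move=> Om20; have [f fE] := form20_hom Om20 u.
exists (W :&: lker f)%VS; last exact: dimv_leS_cap_lker.
by move=> w; rewrite memv_cap memv_ker fE.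
Qed.

Section Antilinear.

Variables (V : vectType Cx) (j : V -> V).
Hypothesis j_anti : antilinear j.

Lemma antilinear0 : j 0 = 0.
Proof.
apply: (addrI (j 0)); have := j_anti 1 0 0.
by rewrite scaler0 !addr0 conjC1 scale1r.
Qed.

Lemma antilinearD u v : j (u + v) = j u + j v.
Proof. by have := j_anti 1 u v; rewrite conjC1 !scale1r. Qed.

Lemma antilinearZ a u : j (a *: u) = a^* *: j u.
Proof. by rewrite -[a *: u]addr0 j_anti antilinear0 addr0. Qed.

End Antilinear.

Lemma quat_structure_neq0 (V : vectType Cx) (j : V -> V) (x : V) :
  quat_structure j -> x != 0 -> j x != 0.
Proof.
move=> [j_anti jj]; apply: contraNneq => jx0.
by rewrite -oppr_eq0 -jj jx0 antilinear0.
Qed.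

Lemma conj_eq_of_real_sum_diff (C : numClosedFieldType) (a b : C) :
  a + b \is Num.real -> 'i * (a - b) \is Num.real -> b = a^*.
Proof.
move=> /CrealP sum_real /CrealP diff_real.
have {}diff_real : b^* - a^* = a - b.
  apply: (mulfI (neq0Ci C)); rewrite -diff_real rmorphM rmorphB /= conjCi.
  by ring.
rewrite rmorphD /= in sum_real.
have : (b - a^*) *+ 2 = (a + b - (a^* + b^*)) + (b^* - a^* - (a - b)) by ring.
rewrite sum_real diff_real !subrr addr0.
by move/eqP; rewrite mulrn_eq0 /= subr_eq0 => /eqP.
Qed.

Section StrictlyPositive.

Variables (V : vectType Cx) (j : V -> V) (Om : V -> V -> Cx).
Hypotheses (jQ : quat_structure j) (Om20 : form20 Om)
  (Om_pos : strictly_positive j Om).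

Lemma strictly_positive_real z : Om z (j z) \is Num.real.
Proof.
have [->|z0] := eqVneq z 0; first by rewrite form20_0l.
exact/gtr0_real/Om_pos.
Qed.

Lemma strictly_positive_herm z w : Om w (j z) = (Om z (j w))^*.
Proof.
have [j_anti _] := jQ.
have expand c : Om (c *: z + w) (j (c *: z + w))
    = c * c^* * Om z (j z) + (c * Om z (j w) + c^* * Om w (j z)) + Om w (j w).
  rewrite antilinearD // antilinearZ // !(form20_Dl Om20, form20_Dr Om20).
  by rewrite !(form20_Zl Om20, form20_Zr Om20); ring.
apply: conj_eq_of_real_sum_diff.
  have := strictly_positive_real (1 *: z + w).
  rewrite expand conjC1 !mul1r rpredDr ?strictly_positive_real //.
  by rewrite rpredDl ?strictly_positive_real.
have := strictly_positive_real ('i *: z + w).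
rewrite expand conjCi mulrN -expr2 sqrCi opprK mul1r mulNr -mulrN -mulrDr.
by rewrite rpredDr ?strictly_positive_real // rpredDl ?strictly_positive_real.
Qed.

Lemma strictly_positive_q_real : q_real j Om.
Proof.
move=> z w; have [_ jj] := jQ.
by rewrite strictly_positive_herm jj form20_Nr // -form20_antisym.
Qed.

End StrictlyPositive.

Definition quat_orthogonal (V : vectType Cx) (j : V -> V) (Om1 Om2 : V -> V -> Cx)
    (u v : V) : Prop :=
  [/\ Om1 u v = 0, Om2 u v = 0, Om1 u (j v) = 0 & Om2 u (j v) = 0].

Section QReal.

Variables (V : vectType Cx) (j : V -> V) (Om : V -> V -> Cx).
Hypotheses (jQ : quat_structure j) (Om20 : form20 Om) (Om_q : q_real j Om).

Lemma q_real_orthogonal_sym u v :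
  Om u v = 0 -> Om u (j v) = 0 -> Om v u = 0 /\ Om v (j u) = 0.
Proof.
have [_ jj] := jQ; move=> uv ujv; split; first by rewrite form20_antisym // uv oppr0.
by apply/eqP; rewrite -conjC_eq0 -Om_q jj form20_Nr // -form20_antisym // ujv.
Qed.

Lemma q_real_orthogonal_iter (p q : bool) x y :
  Om x y = 0 -> Om x (j y) = 0 -> Om (iter p j x) (j (iter q j y)) = 0.
Proof.
have [_ jj] := jQ; move=> xy xjy.
by case: p; case: q => /=; rewrite ?Om_q ?jj ?form20_Nr ?xy ?xjy ?conjC0 ?oppr0.
Qed.

Lemma q_real_orthogonal_iter_flip (p : bool) x :
  Om (iter p j x) (j (iter (~~ p) j x)) = 0.
Proof.
have [_ jj] := jQ.
by case: p => /=; rewrite ?jj ?form20_Nr // form20_alt ?oppr0.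
Qed.

End QReal.

Lemma quat_orthogonal_sym (V : vectType Cx) (j : V -> V) (Om1 Om2 : V -> V -> Cx) u v :
  quat_structure j -> form20 Om1 -> q_real j Om1 -> form20 Om2 -> q_real j Om2 ->
  quat_orthogonal j Om1 Om2 u v -> quat_orthogonal j Om1 Om2 v u.
Proof.
move=> jQ Om1_20 Om1_q Om2_20 Om2_q [uv1 uv2 ujv1 ujv2].
have [vu1 vju1] := q_real_orthogonal_sym jQ Om1_20 Om1_q uv1 ujv1.
by have [vu2 vju2] := q_real_orthogonal_sym jQ Om2_20 Om2_q uv2 ujv2.
Qed.

Section Gram.

Variables (V : vectType Cx) (W : {vspace V}).
Local Notation b := (vbasis W).

Definition gram (Om : V -> V -> Cx) : 'M[Cx]_(\dim W) := \matrix_(k, l) Om b`_k b`_l.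

Definition vbasis_comb (y : 'rV[Cx]_(\dim W)) : V := \sum_k y 0 k *: b`_k.

Lemma vbasis_comb_mem y : vbasis_comb y \in W.
Proof.
apply: memv_suml => k _; apply/memvZ/vbasis_mem/mem_nth.
by rewrite size_tuple.
Qed.

Lemma vbasis_comb_eq0 y : (vbasis_comb y == 0) = (y == 0).
Proof.
apply/eqP/eqP => [y0|->]; last first.
  by rewrite /vbasis_comb big1 // => k _; rewrite mxE scale0r.
apply/rowP => k; rewrite mxE.
exact: (freeP (basis_free (vbasisP W)) (fun i => y 0 i) y0 k).
Qed.

Lemma form20_vbasis_comb Om y (l : 'I_(\dim W)) :
  form20 Om -> Om (vbasis_comb y) b`_l = (y *m gram Om) 0 l.
Proof.
by move=> Om20; rewrite form20_suml // !mxE; apply: eq_bigr => k _; rewrite mxE.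
Qed.

Lemma form20_coord Om u w :
  form20 Om -> w \in W -> Om u w = \sum_l coord b l w * Om u b`_l.
Proof. by move=> Om20 Ww; rewrite {1}(coord_vbasis Ww) form20_sumr. Qed.

Lemma gram_unitmx j Om :
  form20 Om -> strictly_positive j Om -> (forall w, w \in W -> j w \in W) ->
  gram Om \in unitmx.
Proof.
move=> Om20 Om_pos jW; rewrite -row_free_unit; apply/inj_row_free => y yH0.
apply/eqP; rewrite -vbasis_comb_eq0; apply: contraT => y_neq0.
have := Om_pos _ y_neq0; rewrite (form20_coord _ Om20 (jW _ (vbasis_comb_mem y))).
rewrite big1 ?ltxx // => l _.
by rewrite form20_vbasis_comb // yH0 mxE mulr0.
Qed.

End Gram.

Lemma mx_pencil_eigenvector (F : closedFieldType) m (G H : 'M[F]_m) :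
  (0 < m)%N -> H \in unitmx ->
  exists lam, exists2 y : 'rV_m, y != 0 & y *m G = lam *: (y *m H).
Proof.
move=> m_gt0 H_unit.
have [lam root_lam] : exists lam, root (char_poly (G *m invmx H)) lam.
  by apply/closed_rootP; rewrite size_char_poly eqSS -lt0n.
have /eigenvalueP[y yGH y_neq0] : eigenvalue (G *m invmx H) lam.
  by rewrite eigenvalue_root_char.
by exists lam, y; rewrite // scalemxAl -yGH -mulmxA mulmxKV.
Qed.

Lemma form20_relative_eigenvector (V : vectType Cx) (j : V -> V)
    (Om1 Om2 : V -> V -> Cx) (W : {vspace V}) :
  form20 Om1 -> strictly_positive j Om1 -> form20 Om2 ->
  (forall w, w \in W -> j w \in W) -> (0 < \dim W)%N ->
  exists lam, exists2 e, e \in W /\ e != 0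
    & forall w, w \in W -> Om2 e w = lam * Om1 e w.
Proof.
move=> Om1_20 Om1_pos Om2_20 jW dimW_gt0.
have [lam [y y_neq0 yGH]] :=
  mx_pencil_eigenvector (gram W Om2) dimW_gt0 (gram_unitmx Om1_20 Om1_pos jW).
exists lam, (vbasis_comb y); first by rewrite vbasis_comb_mem vbasis_comb_eq0.
move=> w Ww; rewrite (form20_coord _ Om2_20 Ww) (form20_coord _ Om1_20 Ww) mulr_sumr.
by apply: eq_bigr => l _; rewrite !form20_vbasis_comb // yGH mxE mulrCA.
Qed.

Section Induction.

Variables (V : vectType Cx) (j : V -> V) (Om1 Om2 : V -> V -> Cx).
Hypotheses (jQ : quat_structure j) (Om1_20 : form20 Om1)
  (Om1_pos : strictly_positive j Om1) (Om2_20 : form20 Om2) (Om2_q : q_real j Om2).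

Let Om1_q : q_real j Om1 := strictly_positive_q_real jQ Om1_20 Om1_pos.

Lemma quat_orthogonal_complement (W : {vspace V}) e lam :
  (forall w, w \in W -> j w \in W) ->
  (forall w, w \in W -> Om2 e w = lam * Om1 e w) ->
  exists W' : {vspace V}, [/\ {subset W' <= W}, forall w, w \in W' -> j w \in W',
    (\dim W <= (\dim W').+2)%N & forall w, w \in W' -> quat_orthogonal j Om1 Om2 e w].
Proof.
move=> jW e_eig.
have [W1 W1E dimW1] := form20_orthogonal_subspace W e Om1_20.
have [W' W'E dimW'] := form20_orthogonal_subspace W1 (j e) Om1_20.
have memW' w : w \in W' -> [/\ w \in W, Om1 e w = 0 & Om1 (j e) w = 0].
  by rewrite W'E W1E => /andP[/andP[-> /eqP->] /eqP->].
have jW' w : w \in W' -> j w \in W'.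
  move=> /memW'[Ww ew jew]; rewrite W'E W1E jW //= Om1_q ew conjC0 eqxx andbT.
  by rewrite strictly_positive_herm // form20_antisym // jew oppr0 conjC0.
exists W'; split=> //; first by move=> w /memW'[].
  exact: leq_trans dimW1 _.
move=> w W'w; have [Ww ew _] := memW' w W'w; have [Wjw ejw _] := memW' _ (jW' w W'w).
by split; rewrite ?e_eig // ?ew ?ejw mulr0.
Qed.

Lemma exists_quat_orthogonal_family k (W : {vspace V}) :
  (forall w, w \in W -> j w \in W) -> (k.*2 <= \dim W)%N ->
  exists e : 'I_k -> V, [/\ forall a, e a \in W, forall a, e a != 0 &
    forall a b, a != b -> quat_orthogonal j Om1 Om2 (e a) (e b)].
Proof.
elim: k W => [|k IHk] W jW dimW; first by exists (fun _ => 0); split=> -[].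
rewrite doubleS in dimW.
have [lam [e0 [We0 e0_neq0] e0_eig]] :=
  form20_relative_eigenvector Om1_20 Om1_pos Om2_20 jW (leq_trans (ltn0Sn _) dimW).
have [W' [sW'W jW' dimW' e0_orth]] := quat_orthogonal_complement jW e0_eig.
have dimW'k : (k.*2 <= \dim W')%N by rewrite -2!ltnS (leq_trans dimW dimW').
have [e [eW' e_neq0 e_orth]] := IHk W' jW' dimW'k.
exists (fun a => if unlift ord0 a is Some a' then e a' else e0); split.
- by move=> a; case: unliftP => [a'|] _ //; apply/sW'W/eW'.
- by move=> a; case: unliftP.
move=> a b; case: (unliftP ord0 a) => [a'|] ->; case: (unliftP ord0 b) => [b'|] -> //.
- by move=> ab; apply: e_orth; apply: contraNneq ab => ->.
- by move=> _; apply: (quat_orthogonal_sym jQ) => //; apply: e0_orth.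
- by move=> _; apply: e0_orth.
Qed.

End Induction.

Lemma form20_biorthogonal_free (V : vectType Cx) (Om : V -> V -> Cx) (g : V -> V)
    (s : seq V) :
  form20 Om ->
  (forall i, (i < size s)%N -> Om s`_i (g s`_i) != 0) ->
  (forall i l, (i < size s)%N -> (l < size s)%N -> i != l -> Om s`_i (g s`_l) = 0) ->
  free s.
Proof.
move=> Om20 diag off; apply/(@freeP _ _ _ (in_tuple s)) => c c_s i.
have := congr1 (Om ^~ (g s`_i)) c_s; rewrite /= form20_0l // form20_suml //.
rewrite (bigD1 i) //= big1 => [|l li]; last by rewrite off ?mulr0.
by rewrite addr0 => /eqP; rewrite mulf_eq0 (negbTE (diag i (ltn_ord i))) orbF => /eqP.
Qed.

Lemma size_flatten_pairs (T U : Type) (f g : T -> U) (s : seq T) :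
  size (flatten [seq [:: f x; g x] | x <- s]) = (size s).*2.
Proof. by elim: s => //= x s ->. Qed.

Lemma nth_flatten_pairs (T U : Type) (u0 : U) (x0 : T) (f g : T -> U) (s : seq T) i :
  (i./2 < size s)%N ->
  nth u0 (flatten [seq [:: f x; g x] | x <- s]) i = (if odd i then g else f) (nth x0 s i./2).
Proof. by elim: s i => [|x s IHs] [|[|i]] //= lt_i; rewrite IHs // negbK. Qed.

Lemma size_quat_family (V : vectType Cx) (j : V -> V) n (e : 'I_n -> V) :
  size (quat_family j e) = n.*2.
Proof. by rewrite size_flatten_pairs size_enum_ord. Qed.

Lemma nth_quat_family (V : vectType Cx) (j : V -> V) n (e : 'I_n -> V) i
    (lt_i : (i./2 < n)%N) :
  (quat_family j e)`_i = iter (odd i) j (e (Ordinal lt_i)).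
Proof.
rewrite /quat_family (nth_flatten_pairs _ (Ordinal lt_i)) ?size_enum_ord //.
have -> : nth (Ordinal lt_i) (enum 'I_n) i./2 = Ordinal lt_i.
  by apply: val_inj; rewrite /= nth_enum_ord.
by case: (odd i).
Qed.

Lemma odd_neq_of_half_eq i l : i./2 = l./2 -> i != l -> odd l = ~~ odd i.
Proof.
move=> half_il; apply: contraNeq => odd_il.
rewrite -(odd_double_half i) -(odd_double_half l) half_il.
by move: odd_il; case: (odd i); case: (odd l).
Qed.

Lemma quat_family_free (V : vectType Cx) (j : V -> V) (Om : V -> V -> Cx) n
    (e : 'I_n -> V) :
  quat_structure j -> form20 Om -> strictly_positive j Om ->
  (forall a, e a != 0) ->
  (forall a b, a != b -> Om (e a) (e b) = 0 /\ Om (e a) (j (e b)) = 0) ->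
  free (quat_family j e).
Proof.
move=> jQ Om20 Om_pos e_neq0 e_orth; have Om_q := strictly_positive_q_real jQ Om20 Om_pos.
apply: (form20_biorthogonal_free (g := j) Om20) => [i|i l]; rewrite size_quat_family.
  rewrite -ltn_half_double => lt_i; rewrite (nth_quat_family _ _ lt_i).
  apply/lt0r_neq0/Om_pos; case: (odd i) => //=.
  exact: quat_structure_neq0.
rewrite -!ltn_half_double => lt_i lt_l il.
rewrite (nth_quat_family _ _ lt_i) (nth_quat_family _ _ lt_l).
have [same_half | diff_half] := eqVneq (Ordinal lt_i) (Ordinal lt_l).
  rewrite -same_half (odd_neq_of_half_eq (congr1 val same_half) il).
  exact: q_real_orthogonal_iter_flip.
by have [] := e_orth _ _ diff_half; apply: q_real_orthogonal_iter.
Qed.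

Unset Implicit Arguments.

Theorem lemma3 (n : nat) (V : vectType Cx) (j : V -> V)
    (Om1 Om2 : V -> V -> Cx) :
  \dim (fullv : {vspace V}) = (2 * n)%N ->
  quat_structure j ->
  form20 Om1 -> strictly_positive j Om1 ->
  form20 Om2 -> q_real j Om2 ->
  exists e : 'I_n -> V,
    basis_of fullv (quat_family j e) /\
    (forall a b : 'I_n, a != b ->
       [/\ Om1 (e a) (e b) = 0, Om2 (e a) (e b) = 0,
           Om1 (e a) (j (e b)) = 0 & Om2 (e a) (j (e b)) = 0]).
Proof.
move=> dimV jQ Om1_20 Om1_pos Om2_20 Om2_q.
have dimV2 : (n.*2 <= \dim (fullv : {vspace V}))%N by rewrite dimV mul2n.
have [e [_ e_neq0 e_orth]] := exists_quat_orthogonal_family jQ Om1_20 Om1_pos Om2_20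
  Om2_q (fun w _ => memvf (j w)) dimV2.
exists e; split=> //.
rewrite basisEfree subvf size_quat_family dimV mul2n leqnn !andbT.
apply: (quat_family_free jQ Om1_20 Om1_pos e_neq0) => a b /e_orth[].
by split.
Qed.
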